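(* Let $c,o\in\{1,\dots,N\}$ and define the polynomial $$h(s)=e_o^{T}\,\operatorname{adj}(sI+L)\,e_c=\sum_{i=0}^{N-1}h_i s^i,$$ that is, the $(o,c)$ entry of the adjugate of $sI+L$. Then for every $i=0,\dots,N-1$, $$h_i=\vartheta\big(\mathcal F_{N-i-1}^{c\to o}\big).$$
   Context: Let $\mathcal G$ be a weighted directed graph on the vertex set $\{1,\dots,N\}$ with adjacency matrix $A=[a_{ij}]$, where $a_{ij}>0$ if there is an arc from $j$ to $i$ and $a_{ij}=0$ otherwise (no self-loops). The weight of that arc is $a_{ij}$. The Laplacian is $L=D-A$ with $D=\mathrm{diag}(\sum_j a_{ij})$. The vector $e_i$ is the $i$-th canonical basis vector, and $I$ is the identity matrix. A diverging (out-)tree is a set of arcs on a vertex subset that has a root vertex of in-degree $0$, has every other vertex of in-degree exactly $1$, and has a directed path from the root to every vertex of the subset. A spanning diverging forest is a set of arcs whose diverging trees partition all $N$ vertices; isolated vertices are trivial trees. The weight of a forest is the product of its arc weights. $\mathcal F_k^{u\to w}$ is the set of all spanning diverging forests with exactly $k$ arcs in which $u$ is the root of a tree containing $w$. The quantity $\vartheta(\mathcal F_k^{u\to w})$ is the sum of the weights of its members; it is $0$ if the set is empty. *)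

From HB Require Import structures.
From mathcomp Require Import all_boot all_order all_algebra.
Set Implicit Arguments. Unset Strict Implicit. Unset Printing Implicit Defensive.
Import Order.TTheory GRing.Theory Num.Theory.
Local Open Scope ring_scope.

Section Graph.
Variables (R : numDomainType) (N : nat).

(* Adjacency matrix convention: a i j > 0 iff there is an arc j -> i, of weight a i j.
   An arc j -> i is represented by the pair (j, i) : 'I_N * 'I_N. *)

Definition laplacian (a : 'M[R]_N) : 'M[R]_N :=
  \matrix_(i, j) ((i == j)%:R * (\sum_(k < N) a i k) - a i j).

Definition arcrel (F : {set 'I_N * 'I_N}) : rel 'I_N := fun x y => (x, y) \in F.

Definition indeg (F : {set 'I_N * 'I_N}) (v : 'I_N) : nat :=
  #|[set u | (u, v) \in F]|.

(* The diverging trees are then the sets of vertices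
   reached from each root. *)
Definition spanning_div_forest (a : 'M[R]_N) (F : {set 'I_N * 'I_N}) : bool :=
  [&& [forall e in F, 0 < a e.2 e.1],
      [forall v, (indeg F v <= 1)%N] &
      [forall w, exists r, (indeg F r == 0)%N && connect (arcrel F) r w]].

Definition root_of (F : {set 'I_N * 'I_N}) (u w : 'I_N) : bool :=
  (indeg F u == 0)%N && connect (arcrel F) u w.

Definition forest_weight (a : 'M[R]_N) (F : {set 'I_N * 'I_N}) : R :=
  \prod_(e in F) a e.2 e.1.

Definition theta (a : 'M[R]_N) (k : nat) (u w : 'I_N) : R :=
  \sum_(F : {set 'I_N * 'I_N} |
        [&& spanning_div_forest a F, #|F| == k & root_of F u w])
    forest_weight a F.

End Graph.

From HB Require Import structures.
From mathcomp Require Import all_boot all_order all_algebra.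
From mathcomp Require Import zify fingroup perm.
Set Implicit Arguments. Unset Strict Implicit. Unset Printing Implicit Defensive.
Import Order.TTheory GRing.Theory Num.Theory.
Local Open Scope ring_scope.

(* Replace row c of sI + L by e_o, so that its determinant is the (o, c) entry
   of the adjugate.  Every other row i is s e_i + sum_k a_ik (e_i - e_k); choosing
   one summand per row and expanding multilinearly writes the determinant as a
   sum over partial maps f : i |-> k, where f i = None stands for the s e_i term.
   The map f contributes s^(roots other than c) times the product of the chosen
   a_ik, times the determinant of the 0/+-1 matrix with rows e_i - e_(f i) (or
   e_i when f i = None) and e_o in row c.  That determinant is 1 if f has no cycle
   and c is the root of the tree of o, and 0 otherwise: replacing o by its parent
   does not change it, a root r <> c makes rows c and r equal, and a cycle sums
   to a zero combination of rows.  The contributing maps f are the parent maps of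
   the spanning diverging forests with N - 1 - i arcs in which c is the root of o. *)

Lemma order_le_ord n (g : 'I_n -> 'I_n) i : (fingraph.order g i <= n)%N.
Proof. by rewrite /fingraph.order; apply: leq_trans (max_card _) _; rewrite card_ord. Qed.

Lemma iter_ord_periodic n (g : 'I_n -> 'I_n) j :
  exists2 p, (0 < p)%N & iter p g (iter n g j) = iter n g j.
Proof.
have /trajectP [i lt_i_ord loop_i] := looping_order g j.
have le_i_n : (i <= n)%N := leq_trans (ltnW lt_i_ord) (order_le_ord g j).
exists (fingraph.order g j - i)%N; first by rewrite subn_gt0.
have period : iter (fingraph.order g j - i) g (iter i g j) = iter i g j.
  by rewrite -iterD subnK 1?ltnW.
have -> : iter n g j = iter (n - i) g (iter i g j) by rewrite -iterD subnK.
by set y := iter i g j; rewrite -iterD addnC iterD period.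
Qed.

Lemma det_sum_rows (R : comPzRingType) n (J : finType) (w : 'I_n -> J -> R)
    (v : 'I_n -> J -> 'I_n -> R) :
  \det (\matrix_(i, j) \sum_x w i x * v i x j) =
  \sum_(F : {ffun 'I_n -> J}) (\prod_i w i (F i)) * \det (\matrix_(i, j) v i (F i) j).
Proof.
rewrite /determinant.
transitivity (\sum_(s : 'S_n) \sum_(F : {ffun 'I_n -> J})
   (-1) ^+ s * ((\prod_i w i (F i)) * \prod_i v i (F i) (s i))).
  apply: eq_bigr => s _; under eq_bigr do rewrite mxE.
  rewrite bigA_distr_bigA big_distrr; by apply: eq_bigr => F _; rewrite big_split.
rewrite exchange_big; apply: eq_bigr => F _; rewrite big_distrr; apply: eq_bigr => s _.
by rewrite mulrCA; congr (_ * (_ * _)); apply: eq_bigr => i _; rewrite mxE.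
Qed.

Lemma cofactor_delta_row (R : comPzRingType) n (A : 'M[R]_n) i j :
  cofactor A i j = \det (\matrix_(k, l) if k == i then (l == j)%:R else A k l).
Proof.
rewrite (expand_det_row _ i) (bigD1 j) //= big1 ?addr0 => [|l lj]; last first.
  by rewrite !mxE eqxx (negbTE lj) mul0r.
rewrite !mxE !eqxx mul1r /cofactor; congr (_ * \det _).
by apply/matrixP => k l; rewrite !mxE eq_sym (negbTE (neq_lift i k)).
Qed.

Lemma big_option (T : Type) (idx : T) (op : Monoid.com_law idx) (I : finType)
    (F : option I -> T) :
  \big[op/idx]_x F x = op (F None) (\big[op/idx]_i F (Some i)).
Proof.
rewrite (bigD1 None) //= (reindex_omap Some id) => [|[i|] //].
by congr (op _ _); apply: eq_bigl => i; rewrite eqxx.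
Qed.

Lemma det_eq0_left_kernel (R : idomainType) n (A : 'M[R]_n) (y : 'rV[R]_n) i :
  y *m A = 0 -> y 0 i != 0 -> \det A = 0.
Proof.
move=> yA yi; have := congr1 (mulmx^~ (\adj A)) yA.
rewrite -mulmxA mul_mx_adj mul0mx mul_mx_scalar => /matrixP /(_ 0 i) /eqP.
by rewrite !mxE mulf_eq0 (negbTE yi) orbF => /eqP.
Qed.

Lemma det_ranked_mx (R : comPzRingType) n (A : 'M[R]_n) (d : 'I_n -> nat) :
  (forall i j, i != j -> A i j != 0 -> (d j < d i)%N) -> \det A = \prod_i A i i.
Proof.
move=> A_ranked; rewrite /determinant (bigD1 1%g) //= [X in _ + X]big1 ?addr0 => [|s s1].
  by rewrite odd_perm1 expr0 mul1r; apply: eq_bigr => i _; rewrite perm1.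
have [i /eqP Asi | A_s] := pickP [pred i | A i (s i) == 0].
  by rewrite (bigD1 i) //= Asi mul0r mulr0.
have As i : A i (s i) != 0 := negbT (A_s i).
have [i0 si0] : exists i0, s i0 != i0.
  apply/existsP; apply: contraNT s1 => /existsPn s_id.
  by apply/eqP/permP => i; rewrite perm1; apply/eqP/negPn/s_id.
(* s permutes the values of d, yet would strictly lower d at i0. *)
have le_d i : (d (s i) <= d i)%N.
  have [-> // | si] := eqVneq (s i) i.
  by apply: ltnW (A_ranked _ _ _ (As i)); rewrite eq_sym.
have : (\sum_i d (s i) < \sum_i d i)%N.
  rewrite (bigD1 i0) //= [X in (_ < X)%N](bigD1 i0) //= -addSn.
  by apply: leq_add; [apply: A_ranked (As i0); rewrite eq_sym | apply: leq_sum].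
by rewrite [X in (_ < X)%N](reindex_inj (@perm_inj _ s)) ltnn.
Qed.

(* A partial map f sends each vertex to its parent, the tail of its only
   incoming arc, and each root to None. *)
Section ParentMap.
Variables (N : nat) (f : 'I_N -> option 'I_N).

Definition parent (i : 'I_N) : 'I_N := odflt i (f i).

Definition tree_root (i : 'I_N) : 'I_N := iter N parent i.

Definition acyclic : bool := [forall i, f (tree_root i) == None].

Definition parent_arcs : {set 'I_N * 'I_N} := [set e | f e.2 == Some e.1].

Definition extra_roots (c : 'I_N) : nat := \sum_i ((i != c) && (f i == None)).

Lemma iter_parent_root r t : f r = None -> iter t parent r = r.
Proof. by move=> fr; elim: t => //= t ->; rewrite /parent fr. Qed.

Lemma tree_root_iter i t :
  (t <= N)%N -> f (iter t parent i) = None -> tree_root i = iter t parent i.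
Proof.
move=> le_t_N ft; rewrite /tree_root -[N in iter N _ _](subnK le_t_N) iterD.
by rewrite iter_parent_root.
Qed.

Lemma periodic_parent_nonroot x p t :
  (0 < p)%N -> iter p parent x = x -> f x != None -> f (iter t parent x) != None.
Proof.
move=> p_gt0 px; apply: contra => /eqP ft.
have iter_mul q : iter (q * p) parent x = x.
  by elim: q => // q IH; rewrite mulSn iterD IH.
have le_t : (t <= t.+1 * p)%N := leq_trans (leqnSn t) (leq_pmulr _ p_gt0).
suff : iter (t.+1 * p) parent x = iter t parent x by rewrite iter_mul => ->; rewrite ft.
by rewrite -(subnK le_t) iterD iter_parent_root.
Qed.

Definition depth (i : 'I_N) : nat := \sum_(t < N) (f (iter t parent i) != None).

Lemma depth_parent i k : acyclic -> f i = Some k -> depth i = (depth k).+1.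
Proof.
move=> /forallP acyc fi.
have split_ends (g : nat -> nat) : (g 0 + \sum_(t < N) g t.+1 = \sum_(t < N) g t + g N)%N.
  by rewrite -(big_ord_recr N (fun t => g t)) big_ord_recl.
have := split_ends (fun t => nat_of_bool (f (iter t parent i) != None)).
rewrite /= fi (eqP (acyc i)) addn0 add1n -/(depth i) => <-; congr _.+1.
by apply: eq_bigr => t _; rewrite -iterS iterSr /parent fi.
Qed.

Lemma arcrel_parent_arcs x y : arcrel parent_arcs x y = (f y == Some x).
Proof. by rewrite /arcrel inE. Qed.

Lemma indeg_parent_arcs v : indeg parent_arcs v = (f v != None).
Proof.
rewrite /indeg; case fv: (f v) => [k|] /=.
  suff -> : [set u | (u, v) \in parent_arcs] = [set k] by rewrite cards1.
  by apply/setP => u; rewrite !inE fv /= eq_sym.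
suff -> : [set u | (u, v) \in parent_arcs] = set0 by rewrite cards0.
by apply/setP => u; rewrite !inE fv.
Qed.

Lemma connect_parent_arcs x y :
  connect (arcrel parent_arcs) x y = fconnect parent y x.
Proof.
apply/idP/idP => [/connectP [p] | /iter_findex <-].
  elim: p x => [x _ -> | z p IH x /= /andP [xz zp] yp]; first exact: connect0.
  apply: connect_trans (IH z zp yp) (connect1 _).
  by move: xz; rewrite arcrel_parent_arcs /= /parent => /eqP ->.
elim: (findex _ _ _) => [|t IH] /=; first exact: connect0.
apply: connect_trans _ IH; rewrite /parent; case fi: (f _) => [k|] /=.
  by apply: connect1; rewrite arcrel_parent_arcs fi.
exact: connect0.
Qed.

Lemma tree_root_connect x y :
  f x = None -> connect (arcrel parent_arcs) x y -> tree_root y = x.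
Proof.
rewrite connect_parent_arcs => fx yx.
have le_N : (findex parent y x <= N)%N.
  exact: ltnW (leq_trans (findex_max yx) (order_le_ord _ _)).
by rewrite (tree_root_iter le_N) (iter_findex yx).
Qed.

Lemma reach_root_parent_arcs :
  [forall w, exists r, (indeg parent_arcs r == 0)%N && connect (arcrel parent_arcs) r w]
  = acyclic.
Proof.
apply/forallP/forallP => reach w.
  have /existsP [r /andP [root_r rw]] := reach w.
  move: root_r; rewrite indeg_parent_arcs eqb0 negbK => /eqP fr.
  by rewrite (tree_root_connect fr rw) fr.
apply/existsP; exists (tree_root w).
by rewrite indeg_parent_arcs (reach w) connect_parent_arcs fconnect_iter.
Qed.

Lemma root_of_parent_arcs u w :
  root_of parent_arcs u w = (f u == None) && (tree_root w == u).
Proof.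
rewrite /root_of indeg_parent_arcs; case fu: (f u) => [k|] //=.
apply/idP/eqP => [/(tree_root_connect fu) // | <-].
by rewrite connect_parent_arcs fconnect_iter.
Qed.

Lemma big_parent_arcs (T : Type) (idx : T) (op : Monoid.com_law idx)
    (G : 'I_N * 'I_N -> T) :
  \big[op/idx]_(e in parent_arcs) G e
  = \big[op/idx]_i (if f i is Some k then G (k, i) else idx).
Proof.
rewrite big_mkcond /=.
have -> : \big[op/idx]_(e : 'I_N * 'I_N) (if e \in parent_arcs then G e else idx)
    = \big[op/idx]_k \big[op/idx]_i (if (k, i) \in parent_arcs then G (k, i) else idx).
  by rewrite pair_bigA; apply: eq_bigr => -[k i].
rewrite exchange_big; apply: eq_bigr => i _ /=.
case fi: (f i) => [k|]; last by rewrite big1 // => k' _; rewrite inE fi.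
rewrite (bigD1 k) /= ?inE ?fi ?eqxx // big1 ?Monoid.mulm1 // => k' k'k.
by rewrite inE fi; case: eqP => // -[kk']; rewrite kk' eqxx in k'k.
Qed.

Lemma card_parent_arcs c : f c = None -> (#|parent_arcs| + extra_roots c)%N = N.-1.
Proof.
move=> fc; rewrite -sum1_card big_parent_arcs /extra_roots -big_split /=.
rewrite (eq_bigr (fun i => nat_of_bool (i != c))) => [|i _].
  by rewrite -big_mkcond /= sum1_card cardC1 card_ord.
by have [->|_] := eqVneq i c; rewrite ?fc //; case: (f i).
Qed.

End ParentMap.

Lemma forest_weight_parent_arcs (R : numDomainType) N (a : 'M[R]_N) f :
  forest_weight a (parent_arcs f) = \prod_i (if f i is Some k then a i k else 1).
Proof. exact: big_parent_arcs. Qed.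

Lemma forest_weight_eq0 (R : numDomainType) N (a : 'M[R]_N) (S : {set 'I_N * 'I_N}) :
  (forall i j, 0 <= a i j) -> ~~ [forall e in S, 0 < a e.2 e.1] ->
  forest_weight a S = 0.
Proof.
move=> a_nneg /forall_inPn [e Se]; rewrite lt0r a_nneg andbT negbK => /eqP ae.
by rewrite /forest_weight (bigD1 e) //= ae mul0r.
Qed.

Lemma spanning_div_forest_parent_arcs (R : numDomainType) N (a : 'M[R]_N) f :
  spanning_div_forest a (parent_arcs f)
  = [forall e in parent_arcs f, 0 < a e.2 e.1] && acyclic f.
Proof.
rewrite /spanning_div_forest reach_root_parent_arcs.
suff -> : [forall v, (indeg (parent_arcs f) v <= 1)%N] by [].
by apply/forallP => v; rewrite indeg_parent_arcs; case: (f v).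
Qed.

Lemma parent_arcs_inj N : injective (fun f : {ffun 'I_N -> option 'I_N} => parent_arcs f).
Proof.
move=> f g /setP fg; apply/ffunP => i.
case fi: (f i) => [k|]; first by move: (fg (k, i)); rewrite !inE fi eqxx => /esym/eqP.
by case gi: (g i) => [k|] //; move: (fg (k, i)); rewrite !inE fi gi eqxx.
Qed.

Lemma parent_arcs_pick N (S : {set 'I_N * 'I_N}) :
  (forall v, indeg S v <= 1)%N -> S = parent_arcs [ffun v => [pick u | (u, v) \in S]].
Proof.
move=> indeg1; apply/setP => -[u v]; rewrite inE ffunE /=.
case: pickP => [u' Su' | noS]; last by rewrite noS.
apply/idP/eqP => [Suv | [<-] //]; congr Some.
by apply: (card_le1_eqP (indeg1 v)); rewrite inE.
Qed.

Lemma sum_parent_arcs (V : nmodType) N (P : pred {set 'I_N * 'I_N})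
    (G : {set 'I_N * 'I_N} -> V) :
  (forall S, P S -> forall v, (indeg S v <= 1)%N) ->
  \sum_(f : {ffun 'I_N -> option 'I_N} | P (parent_arcs f)) G (parent_arcs f)
  = \sum_(S | P S) G S.
Proof.
move=> P_indeg; rewrite big_mkcond [RHS]big_mkcond /=.
pose image := [set parent_arcs f | f : {ffun 'I_N -> option 'I_N}].
rewrite [RHS](bigID (mem image)) /=.
rewrite [X in _ = _ + X]big1 ?addr0 => [|S]; last first.
  by case: ifP => // /P_indeg/parent_arcs_pick ->; rewrite imset_f.
rewrite big_imset /=; last by move=> f g _ _; apply: parent_arcs_inj.
by apply: eq_bigl => f; rewrite inE.
Qed.

Section ForestMatrix.
Variables (R : numDomainType) (N : nat) (f : 'I_N -> option 'I_N) (c : 'I_N).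

Definition forest_entry (o i : 'I_N) (x : option 'I_N) (j : 'I_N) : R :=
  if i == c then (j == o)%:R
  else if x is Some k then (j == i)%:R - (j == k)%:R else (j == i)%:R.

Definition forest_mx (o : 'I_N) : 'M[R]_N := \matrix_(i, j) forest_entry o i (f i) j.

Hypothesis fc : f c = None.

Lemma det_forest_mx_parent o : \det (forest_mx o) = \det (forest_mx (parent f o)).
Proof.
rewrite /parent; case fo: (f o) => [k|] //=.
have oc : o != c by apply/eqP => oc; rewrite oc fc in fo.
(* Row c, e_o = e_k + (e_o - e_k), splits and the second summand repeats row o. *)
pose C := \matrix_(i, j) if i == c then forest_mx o o j else forest_mx o i j.
rewrite (@determinant_multilinear _ _ (forest_mx o) (forest_mx k) C c 1 1).
- rewrite (@determinant_alternate _ _ C c o) ?mulr0 ?addr0 ?mul1r 1?eq_sym // => j.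
  by rewrite !mxE eqxx (negbTE oc).
- apply/rowP => j; rewrite !mxE /forest_entry eqxx (negbTE oc) fo !mul1r.
  by rewrite addrC subrK.
- by apply/matrixP => i j; rewrite !mxE /forest_entry eq_sym (negbTE (neq_lift c i)).
- by apply/matrixP => i j; rewrite !mxE eq_sym (negbTE (neq_lift c i)).
Qed.

Lemma det_forest_mx_tree_root o : \det (forest_mx o) = \det (forest_mx (tree_root f o)).
Proof.
have iter_eq t : \det (forest_mx o) = \det (forest_mx (iter t (parent f) o)).
  by elim: t => //= t ->; apply: det_forest_mx_parent.
exact: iter_eq.
Qed.

Lemma det_forest_mx_other_root r : f r = None -> r != c -> \det (forest_mx r) = 0.
Proof.
move=> fr rc; apply: (@determinant_alternate _ _ _ c r); first by rewrite eq_sym.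
by move=> j; rewrite !mxE /forest_entry eqxx (negbTE rc) fr.
Qed.

Lemma det_forest_mx_cycle o x p :
  (0 < p)%N -> iter p (parent f) x = x -> f x != None -> \det (forest_mx o) = 0.
Proof.
move=> p_gt0 px fx; pose z t := iter t (parent f) x.
have nonroot t : f (z t) != None := periodic_parent_nonroot t p_gt0 px fx.
have zc t : z t != c by apply: contra_neq (nonroot t) => ->.
have f_z t : f (z t) = Some (z t.+1).
  by move: (nonroot t); rewrite /z iterS /parent; case: (f _).
(* The indicator of the cycle through x is a left null vector. *)
pose e t : 'rV[R]_N := delta_mx 0 (z t).
have row_z t : e t *m forest_mx o = e t - e t.+1.
  by rewrite -rowE; apply/rowP => j; rewrite !mxE /forest_entry (negbTE (zc t)) f_z !eqxx.
apply: (@det_eq0_left_kernel _ _ _ (\sum_(t < p) e t) x).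
  rewrite mulmx_suml; under eq_bigr do rewrite row_z.
  rewrite -[LHS]opprK -sumrN.
  rewrite (eq_bigr (fun t : 'I_p => e t.+1 - e t)) => [|t _]; last by rewrite opprB.
  by rewrite -(big_mkord xpredT (fun t => e t.+1 - e t)) telescope_sumr // /e /z px subrr oppr0.
rewrite summxE; under eq_bigr do rewrite mxE eqxx /=.
by rewrite -natr_sum pnatr_eq0 -lt0n (bigD1 (Ordinal p_gt0)) //= /z eqxx.
Qed.

Lemma det_forest_mx_acyclic : acyclic f -> \det (forest_mx c) = 1.
Proof.
move=> acyc; rewrite (@det_ranked_mx _ _ _ (depth f)) => [|i j ij].
  apply: big1 => i _; rewrite mxE /forest_entry.
  have [_ | _] := eqVneq i c; first by [].
  case fi: (f i) => [k|]; rewrite eqxx //.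
  suff /negbTE -> : i != k by rewrite subr0.
  have lt_k_i : (depth f k < depth f i)%N by rewrite (depth_parent acyc fi).
  by apply: contraTneq lt_k_i => ->; rewrite ltnn.
rewrite mxE /forest_entry [j == i]eq_sym (negbTE ij).
have [ic | ic] := eqVneq i c.
  by rewrite pnatr_eq0 eqb0 negbK => /eqP jc; rewrite jc ic eqxx in ij.
case fi: (f i) => [k|] /=; last by rewrite eqxx.
rewrite sub0r oppr_eq0 pnatr_eq0 eqb0 negbK => /eqP ->.
by rewrite (depth_parent acyc fi).
Qed.

Lemma det_forest_mx o : \det (forest_mx o) = (acyclic f && (tree_root f o == c))%:R.
Proof.
rewrite det_forest_mx_tree_root; have [acyc | /forallPn [j fj]] /= := boolP (acyclic f).
  have [-> | rc] := eqVneq (tree_root f o) c; first exact: det_forest_mx_acyclic.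
  by apply: det_forest_mx_other_root rc; apply/eqP/(forallP acyc).
have [p p_gt0 period] := iter_ord_periodic (parent f) j.
exact: det_forest_mx_cycle p_gt0 period fj.
Qed.

End ForestMatrix.

(* Row c is e_o alone, taken with the choice None. *)
Definition arc_coef (R : numDomainType) N (a : 'M[R]_N) (c i : 'I_N)
    (x : option 'I_N) : R :=
  if i == c then (x == None)%:R else if x is Some k then a i k else 1.

Lemma char_laplacian_row (R : numDomainType) N (a : 'M[R]_N) (c o i j : 'I_N) :
  (if i == c then (j == o)%:R else ('X%:M + map_mx polyC (laplacian a)) i j)
  = \sum_x (arc_coef a c i x)%:P * 'X ^+ ((i != c) && (x == None))
           * (forest_entry R c o i x j)%:P.
Proof.
rewrite big_option /arc_coef /forest_entry; have [_ | ic] /= := eqVneq i c.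
  rewrite big1 ?addr0 => [|k _];
    by rewrite ?polyC0 ?polyC1 ?mul0r ?mul1r ?mulr1 ?polyC_natr.
have row_sum : \sum_k a i k * ((j == i)%:R - (j == k)%:R)
               = (i == j)%:R * \sum_k a i k - a i j.
  under eq_bigr do rewrite mulrBr.
  rewrite sumrB -big_distrl /= mulrC [j == i]eq_sym; congr (_ - _).
  rewrite (bigD1 j) //= eqxx mulr1 big1 ?addr0 // => k kj.
  by rewrite eq_sym (negbTE kj) mulr0.
under eq_bigr do rewrite expr0 mulr1 -polyCM.
rewrite -rmorph_sum row_sum !mxE [j == i]eq_sym.
by rewrite polyC1 mul1r expr1 polyC_natr mulr_natr.
Qed.

Lemma coef_adj_char_laplacian (R : numDomainType) N (a : 'M[R]_N) (c o : 'I_N) n :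
  (\adj ('X%:M + map_mx polyC (laplacian a)) o c)`_n
  = \sum_(F : {ffun 'I_N -> option 'I_N})
      (\prod_i arc_coef a c i (F i)) * \det (forest_mx R F c o) * (n == extra_roots F c)%:R.
Proof.
rewrite mxE cofactor_delta_row.
under eq_mx do rewrite char_laplacian_row.
rewrite det_sum_rows coef_sum; apply: eq_bigr => F _.
rewrite big_split /= prodrXr -rmorph_prod mul_polyC -scalerAl.
have -> : \matrix_(i, j) (forest_entry R c o i (F i) j)%:P
         = map_mx polyC (forest_mx R F c o).
  by apply/matrixP => i j; rewrite !mxE.
by rewrite det_map_mx mulrC mul_polyC scalerA coefZ coefXn.
Qed.

Lemma forest_summand (R : numDomainType) N (a : 'M[R]_N) (c o : 'I_N)
    (F : 'I_N -> option 'I_N) n :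
  (forall i j, 0 <= a i j) -> (n < N)%N ->
  (\prod_i arc_coef a c i (F i)) * \det (forest_mx R F c o) * (n == extra_roots F c)%:R
  = if [&& spanning_div_forest a (parent_arcs F), #|parent_arcs F| == (N - n - 1)%N
          & root_of (parent_arcs F) c o]
    then forest_weight a (parent_arcs F) else 0.
Proof.
move=> a_nneg lt_n_N; rewrite root_of_parent_arcs.
case fc: (F c) => [k|] /=.
  by rewrite (bigD1 c) //= /arc_coef eqxx fc !mul0r !andbF.
have -> : \prod_i arc_coef a c i (F i) = forest_weight a (parent_arcs F).
  rewrite forest_weight_parent_arcs; apply: eq_bigr => i _; rewrite /arc_coef.
  by have [->|_] := eqVneq i c; rewrite ?fc.
have -> : (#|parent_arcs F| == (N - n - 1)%N) = (n == extra_roots F c).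
  by have := card_parent_arcs fc; move=> card_eq; apply/eqP/eqP; lia.
rewrite det_forest_mx // spanning_div_forest_parent_arcs.
have [_ | /(forest_weight_eq0 a_nneg) ->] := boolP [forall e in parent_arcs F, 0 < a e.2 e.1];
  last by rewrite !mul0r.
by case: (acyclic F) (tree_root F o == c) (n == _) => [] [] []; rewrite /= ?mulr1 ?mulr0.
Qed.

Theorem lemma2 (R : numDomainType) (N : nat) (a : 'M[R]_N)
  (a_nneg : forall i j, 0 <= a i j) (a_diag : forall i, a i i = 0)
  (c o : 'I_N) :
  let h : {poly R} := \adj ('X%:M + map_mx polyC (laplacian a)) o c in
  forall i : 'I_N, h`_i = theta a (N - i - 1) c o.
Proof.
move=> h n; rewrite /h coef_adj_char_laplacian /theta.
pose in_theta S := [&& spanning_div_forest a S, #|S| == (N - n - 1)%N & root_of S c o].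
rewrite -(@sum_parent_arcs _ _ in_theta) => [|S /and3P [/and3P [_ /forallP //]]].
rewrite [RHS]big_mkcond; apply: eq_bigr => F _.
exact: forest_summand (ltn_ord n).
Qed.
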